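(* (ZFC) $\mathfrak{d}\le\mathfrak{i}_{cl}$.
   Context: An independent family is a set $\mathcal{I}\subseteq\mathcal{P}(\omega)$ such that for all disjoint finite $\mathcal{A}_0,\mathcal{A}_1\subseteq\mathcal{I}$, the set $\bigcap_{x\in\mathcal{A}_0}x\cap\bigcap_{x\in\mathcal{A}_1}(\omega\setminus x)$ is infinite; it is a maximal independent family if it is maximal under inclusion among independent families. $\mathfrak{i}_{cl}$ is the smallest cardinality of a collection of closed subsets of $\mathcal{P}(\omega)$ (identified with $2^\omega$ via characteristic functions) whose union is a maximal independent family. $\mathfrak{d}$ is the dominating number, the least size of a family $\mathcal{F}\subseteq\omega^\omega$ such that every $g\in\omega^\omega$ is eventually dominated by some member of $\mathcal{F}$. *)

(* Subsets of omega are represented by characteristic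
   functions nat -> bool (P(omega) identified with 2^omega). *)
From Stdlib Require Import List Arith.
Import ListNotations.

Definition subset_omega := nat -> bool.
Definition family := subset_omega -> Prop.

(* Closed subsets of 2^omega (product topology): the complement is open, i.e.
   every point outside A has a basic clopen neighbourhood
   [x|n] = {y | forall k < n, y k = x k} disjoint from A. *)
Definition closed_cantor (A : subset_omega -> Prop) : Prop :=
  forall x, ~ A x -> exists n, forall y, (forall k, k < n -> y k = x k) -> ~ A y.

Definition bool_comb_infinite (A0 A1 : list subset_omega) : Prop :=
  forall N, exists m, N <= m /\
    (forall x, In x A0 -> x m = true) /\ (forall x, In x A1 -> x m = false).

Definition independent (I : family) : Prop :=
  forall A0 A1 : list subset_omega,
    (forall x, In x A0 -> I x) -> (forall x, In x A1 -> I x) ->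
    (forall x, In x A0 -> ~ In x A1) ->
    bool_comb_infinite A0 A1.

Definition maximal_independent (I : family) : Prop :=
  independent I /\
  forall J : family, (forall x, I x -> J x) -> independent J -> forall x, J x -> I x.

Definition eventually_dominated (g f : nat -> nat) : Prop :=
  exists N, forall n, N <= n -> g n <= f n.

Definition dominating {K : Type} (F : K -> nat -> nat) : Prop :=
  forall g : nat -> nat, exists k, eventually_dominated g (F k).

(* Being infinite, I contains
   a sequence A_j converging to some z.  For finite s ⊆ K and m, call admissible the points of
   the closure of U_{k in s} C_k ∪ {A_j}, with z removed when z ∉ I: they form a closed subset
   of I.  Independence realizes every sign pattern on any m-separated tuple of at most m
   admissible points somewhere above m, and compactness bounds such a place by F_s(m).  The
   functions F_s dominate: given g escaping all of them, cut ω into windows so long that g on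
   one window stays below the end of the next, and let x copy A_j on the j-th window.  Adding
   A_j and A_(j+1) to a Boolean combination and reading the pattern at a place where g beats
   F_s, one finds x taking any prescribed value inside the combination, so I + x is independent,
   contradicting maximality.  As K is either finite or satisfies |K^(<ω)| = |K|, the F_s can be
   indexed by K. *)

From Stdlib Require Import PeanoNat List Lia Classical ClassicalEpsilon
  FunctionalExtensionality PropExtensionality Wf_nat Cantor.
From mathcomp Require classical_sets.
Import ListNotations.

Definition agree {X} (n : nat) (a b : nat -> X) := forall i, i < n -> a i = b i.

Definition closed {X} (P : (nat -> X) -> Prop) :=
  forall y, ~ P y -> exists N, forall y', agree N y' y -> ~ P y'.

Definition eventually (P : nat -> Prop) := exists N, forall n, N <= n -> P n.

Definition upd {X} (f : nat -> X) (n : nat) (v : X) : nat -> X :=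
  fun i => if Nat.eqb i n then v else f i.

Definition holds (P : Prop) : bool := if excluded_middle_informative P then true else false.

Lemma holds_true (P : Prop) : P -> holds P = true.
Proof. unfold holds; destruct (excluded_middle_informative P); tauto. Qed.

Lemma holds_false (P : Prop) : ~ P -> holds P = false.
Proof. unfold holds; destruct (excluded_middle_informative P); tauto. Qed.

Lemma holds_spec (P : Prop) : holds P = true -> P.
Proof. unfold holds; destruct (excluded_middle_informative P); [auto | discriminate]. Qed.

Lemma least_witness (P : nat -> Prop) :
  (exists n, P n) -> exists n, P n /\ forall m, m < n -> ~ P m.
Proof.
  intros Hex.
  destruct (dec_inh_nat_subset_has_unique_least_element P (fun n => classic (P n)) Hex)
    as [n [[Pn Hmin] _]].
  exists n; split; auto; intros m Hm Pm; specialize (Hmin m Pm); lia.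
Qed.

Lemma agree_sym {X} n (a b : nat -> X) : agree n a b -> agree n b a.
Proof. intros H i Hi; symmetry; auto. Qed.

Lemma agree_trans {X} n (a b c : nat -> X) : agree n a b -> agree n b c -> agree n a c.
Proof. intros H1 H2 i Hi; rewrite H1; auto. Qed.

Lemma agree_le {X} m n (a b : nat -> X) : m <= n -> agree n a b -> agree m a b.
Proof. intros Hm H i Hi; apply H; lia. Qed.

Lemma nagree_le {X} m n (a b : nat -> X) : m <= n -> ~ agree m a b -> ~ agree n a b.
Proof. intros Hm H Ha; apply H, (agree_le m n); auto. Qed.

Lemma nagree_neq {X} n (a b : nat -> X) : ~ agree n a b -> a <> b.
Proof. intros H ->; apply H; intros i _; reflexivity. Qed.

Lemma agree_upd {X} n (f g : nat -> X) : agree n g f -> agree (S n) g (upd f n (g n)).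
Proof.
  intros H i Hi; unfold upd.
  destruct (Nat.eqb_spec i n) as [->|Hne]; auto; apply H; lia.
Qed.

Lemma neq_differ {X} (a b : nat -> X) : a <> b -> exists i, a i <> b i.
Proof.
  intros H; apply NNPP; intros Hn; apply H, functional_extensionality; intros i.
  apply NNPP; eauto.
Qed.

Lemma first_difference {X} (a b : nat -> X) : a <> b -> exists n, agree n a b /\ a n <> b n.
Proof.
  intros H; destruct (least_witness _ (neq_differ a b H)) as [n [Hn Hmin]].
  exists n; split; auto; intros i Hi; apply NNPP, Hmin; auto.
Qed.

Lemma eventually_nagree {X} (a b : nat -> X) : a <> b -> eventually (fun n => ~ agree n a b).
Proof.
  intros H; destruct (neq_differ a b H) as [i Hi].
  exists (S i); intros n Hn Ha; apply Hi, Ha; lia.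
Qed.

Lemma eventually_ge N : eventually (fun n => N <= n).
Proof. exists N; auto. Qed.

Lemma eventually_and (P Q : nat -> Prop) :
  eventually P -> eventually Q -> eventually (fun n => P n /\ Q n).
Proof. intros [M HM] [N HN]; exists (M + N); split; [apply HM | apply HN]; lia. Qed.

Lemma eventually_forall_in {X} (l : list X) (R : X -> nat -> Prop) :
  (forall x, In x l -> eventually (R x)) -> eventually (fun n => forall x, In x l -> R x n).
Proof.
  induction l as [|a l IH]; intros H; [exists 0; intros n _ x []|].
  destruct (eventually_and _ _ (H a (or_introl eq_refl)) (IH (fun x Hx => H x (or_intror Hx))))
    as [N HN].
  exists N; intros n Hn x [<-|Hx]; [exact (proj1 (HN n Hn)) | exact (proj2 (HN n Hn) x Hx)].
Qed.

Lemma eventually_forall_lt (k : nat) (R : nat -> nat -> Prop) :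
  (forall i, i < k -> eventually (R i)) -> eventually (fun n => forall i, i < k -> R i n).
Proof.
  intros H; destruct (eventually_forall_in (seq 0 k) R) as [N HN].
  - intros i Hi; apply in_seq in Hi; apply H; lia.
  - exists N; intros n Hn i Hi; apply HN; [lia | apply in_seq; lia].
Qed.

Lemma closed_or {X} (P Q : (nat -> X) -> Prop) :
  closed P -> closed Q -> closed (fun y => P y \/ Q y).
Proof.
  intros HP HQ y Hy.
  destruct (HP y) as [M HM]; [tauto|]; destruct (HQ y) as [N HN]; [tauto|].
  exists (M + N); intros y' Hy' [H|H]; [apply (HM y') | apply (HN y')]; auto;
    apply (agree_le _ (M + N)); auto; lia.
Qed.

Lemma closed_and {X} (P Q : (nat -> X) -> Prop) :
  closed P -> closed Q -> closed (fun y => P y /\ Q y).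
Proof.
  intros HP HQ y Hy; destruct (classic (P y)) as [Py|nPy].
  - destruct (HQ y) as [N HN]; [tauto|]; exists N; intros y' Hy' [_ H]; exact (HN y' Hy' H).
  - destruct (HP y nPy) as [N HN]; exists N; intros y' Hy' [H _]; exact (HN y' Hy' H).
Qed.

Lemma closed_forall {X Ix} (P : Ix -> (nat -> X) -> Prop) :
  (forall i, closed (P i)) -> closed (fun y => forall i, P i y).
Proof.
  intros HP y Hy; apply not_all_ex_not in Hy as [i Hi].
  destruct (HP i y Hi) as [N HN]; exists N; intros y' Hy' H; exact (HN y' Hy' (H i)).
Qed.

Lemma closed_imp {X} (H : Prop) (P : (nat -> X) -> Prop) : closed P -> closed (fun y => H -> P y).
Proof.
  intros HP y Hy; destruct (HP y) as [N HN]; [tauto|].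
  exists N; intros y' Hy' H'; apply (HN y' Hy'); tauto.
Qed.

Lemma closed_local {X} m (P : (nat -> X) -> Prop) :
  (forall y y', agree m y' y -> P y' -> P y) -> closed P.
Proof. intros Hloc y Hy; exists m; intros y' Hy' H; exact (Hy (Hloc y y' Hy' H)). Qed.

Lemma closed_preimage {X Y} (f : (nat -> X) -> (nat -> Y)) (P : (nat -> Y) -> Prop) :
  (forall N y y', agree N y' y -> agree N (f y') (f y)) -> closed P -> closed (fun y => P (f y)).
Proof.
  intros Hf HP y Hy; destruct (HP (f y) Hy) as [N HN].
  exists N; intros y' Hy'; apply HN, Hf; auto.
Qed.

(** * Compactness of closed sets of sequences over a finite alphabet *)

Section Branch.
Variables (X : Type) (good : nat -> (nat -> X) -> Prop) (x0 : nat -> X).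
Hypothesis good_agree : forall n f f', agree n f f' -> good n f -> good n f'.
Hypothesis good_0 : good 0 x0.
Hypothesis good_step : forall n f, good n f -> exists a, good (S n) (upd f n a).

Fixpoint approx (n : nat) : nat -> X :=
  match n with
  | 0 => x0
  | S n => upd (approx n) n
             (epsilon (inhabits (x0 0)) (fun a => good (S n) (upd (approx n) n a)))
  end.

Lemma approx_good n : good n (approx n).
Proof.
  induction n as [|n IH]; simpl; auto.
  apply (epsilon_spec (inhabits (x0 0)) (fun a => good (S n) (upd (approx n) n a))); auto.
Qed.

Lemma approx_stable n i : i < n -> approx n i = approx (S i) i.
Proof.
  induction n as [|n IH]; intros Hi; [lia|].
  destruct (Nat.eq_dec i n) as [->|Hne]; auto.
  simpl approx at 1; unfold upd at 1.
  destruct (Nat.eqb_spec i n); [lia | apply IH; lia].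
Qed.

Lemma infinite_branch : exists x, forall n, good n x.
Proof.
  exists (fun i => approx (S i) i); intros n.
  apply (good_agree n (approx n)); [|apply approx_good].
  intros i Hi; apply approx_stable; auto.
Qed.
End Branch.

Section Compactness.
Variables (X : Type) (alphabet : list X) (P : (nat -> X) -> Prop) (Q : (nat -> X) -> nat -> Prop).
Hypothesis P_alphabet : forall y i, P y -> In (y i) alphabet.
Hypothesis P_closed : closed P.
Hypothesis Q_local : forall y y' p, agree (S p) y' y -> Q y p -> Q y' p.
Hypothesis P_covered : forall y, P y -> exists p, Q y p.

Let bad n f :=
  ~ eventually (fun B => forall y, P y -> agree n y f -> exists p, p <= B /\ Q y p).

Let bad_step n f : bad n f -> exists a, bad (S n) (upd f n a).
Proof.
  intros Hbad; apply NNPP; intros Hn; apply Hbad.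
  destruct (eventually_forall_in alphabet
              (fun a B => forall y, P y -> agree (S n) y (upd f n a) ->
                          exists p, p <= B /\ Q y p)) as [B HB].
  { intros a _; apply NNPP; intros Ha; apply Hn; exists a; exact Ha. }
  exists B; intros B' HB' y Py Hy.
  destruct (HB B' HB' (y n) (P_alphabet y n Py) y Py (agree_upd n f y Hy)) as [p Hp].
  exists p; auto.
Qed.

(* König: the cylinders with unbounded witnesses form a finitely branching tree; a branch
   through it is either in [P], and then its witness is valid on a whole cylinder, or outside
   the closed set [P], and then a whole cylinder misses [P]. *)
Lemma compactness : exists B, forall y, P y -> exists p, p <= B /\ Q y p.
Proof.
  apply NNPP; intros Hn.
  assert (Hy0 : exists y0, P y0).
  { apply NNPP; intros H; apply Hn; exists 0; intros y Py; exfalso; eauto. }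
  destruct Hy0 as [y0 _].
  destruct (infinite_branch _ bad y0) as [x Hx].
  - intros n f f' Hf Hb Hev; apply Hb.
    destruct Hev as [B0 HB0]; exists B0; intros B HB y Py Hy.
    apply (HB0 B HB y Py), (agree_trans n y f); auto.
  - intros [N HN]; apply Hn; exists N; intros y Py.
    apply (HN N (le_n N) y Py); intros i Hi; lia.
  - exact bad_step.
  - destruct (classic (P x)) as [Px|nPx].
    + destruct (P_covered x Px) as [p Hp].
      apply (Hx (S p)); exists p; intros B HB y Py Hy.
      exists p; split; auto; apply (Q_local x); auto.
    + destruct (P_closed x nPx) as [N HN].
      apply (Hx N); exists 0; intros B _ y Py Hy; exfalso; exact (HN y Hy Py).
Qed.
End Compactness.

(** * An infinite type maps onto its finite sequences *)

Definition union {T} (F : (T -> Prop) -> Prop) : T -> Prop := fun t => exists X, F X /\ X t.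

Definition chain {T} (F : (T -> Prop) -> Prop) :=
  forall X Y, F X -> F Y -> (forall t, X t -> Y t) \/ (forall t, Y t -> X t).

Lemma union_chain_pair {T} (F : (T -> Prop) -> Prop) a b :
  chain F -> union F a -> union F b -> exists X, F X /\ X a /\ X b.
Proof.
  intros Fchain [X [FX Xa]] [Y [FY Yb]].
  destruct (Fchain X Y FX FY) as [XY|YX]; [exists Y | exists X]; auto.
Qed.

Lemma zorn {T} (P : (T -> Prop) -> Prop) :
  (forall F, (forall X, F X -> P X) -> chain F -> P (union F)) ->
  exists A, P A /\ forall B, (forall t, A t -> B t) -> P B -> forall t, B t -> A t.
Proof.
  intros H.
  destruct (@classical_sets.Zorn_bigcup T P) as [A [PA HA]].
  - intros F FP Ftot.
    replace (classical_sets.bigcup F (fun X => X)) with (union F); [now apply H|].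
    apply functional_extensionality; intros t; apply propositional_extensionality.
    split; [intros [X [FX Xt]]; exists X; auto | intros [X FX Xt]; exists X; auto].
  - exists A; split; auto; intros B AB PB t Bt; apply NNPP; intros nA.
    apply (HA B); auto; split; [exact AB | intros BA; exact (nA (BA t Bt))].
Qed.

Definition onto {X Y} (D : X -> Prop) (E : Y -> Prop) (h : X -> Y) :=
  forall y, E y -> exists x, D x /\ h x = y.

Definition square {X} (D : X -> Prop) (p : X * X) := D (fst p) /\ D (snd p).

Definition lift_square {X Y} (f : X -> X * X) (h : X -> Y) (x : X) : Y * Y :=
  (h (fst (f x)), h (snd (f x))).

Lemma onto_lift_square {X Y} (D : X -> Prop) (E : Y -> Prop) f h :
  onto D (square D) f -> onto D E h -> onto D (square E) (lift_square f h).
Proof.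
  intros Hf Hh [a b] [Ea Eb].
  destruct (Hh a Ea) as [x1 [D1 <-]]; destruct (Hh b Eb) as [x2 [D2 <-]].
  destruct (Hf (x1, x2) (conj D1 D2)) as [x [Dx Ex]].
  exists x; unfold lift_square; rewrite Ex; auto.
Qed.

(* Reading the second coordinate of [f x] as a bit, [D ->> D x D] yields [D ->> D + D]. *)
Definition merge {X} (f : X -> X * X) (k0 : X) (h : X -> X) (x : X) : X :=
  if excluded_middle_informative (snd (f x) = k0) then fst (f x) else h (fst (f x)).

Lemma onto_merge {X} (D E : X -> Prop) f k0 k1 h :
  onto D (square D) f -> D k0 -> D k1 -> k0 <> k1 -> onto D E h ->
  onto D (fun y => D y \/ E y) (merge f k0 h).
Proof.
  intros Hf D0 D1 H01 Hh y [Dy|Ey].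
  - destruct (Hf (y, k0) (conj Dy D0)) as [x [Dx Ex]].
    exists x; split; auto; unfold merge; rewrite Ex; simpl.
    destruct (excluded_middle_informative (k0 = k0)); tauto.
  - destruct (Hh y Ey) as [a [Da <-]]; destruct (Hf (a, k1) (conj Da D1)) as [x [Dx Ex]].
    exists x; split; auto; unfold merge; rewrite Ex; simpl.
    destruct (excluded_middle_informative (k1 = k0)); congruence.
Qed.

Lemma merge_range {X} (D : X -> Prop) f k0 h x :
  D (fst (f x)) -> D (merge f k0 h x) \/ exists a, D a /\ h a = merge f k0 h x.
Proof.
  intros Dx; unfold merge.
  destruct (excluded_middle_informative (snd (f x) = k0)); [left | right; exists (fst (f x))]; auto.
Qed.

Lemma injection_or_onto {X Y} (D : X -> Prop) (E : Y -> Prop) (y0 : Y) :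
  (exists i : X -> Y, (forall x, D x -> E (i x)) /\
                      (forall x x', D x -> D x' -> i x = i x' -> x = x'))
  \/ exists h : X -> Y, onto D E h.
Proof.
  set (partial_injection := fun J : X * Y -> Prop =>
    (forall x y, J (x, y) -> D x /\ E y) /\
    (forall x y y', J (x, y) -> J (x, y') -> y = y') /\
    (forall x x' y, J (x, y) -> J (x', y) -> x = x')).
  destruct (zorn partial_injection) as [J [[JDE [Jfun Jinj]] Jmax]].
  { intros F HF Fchain; refine (conj _ (conj _ _)).
    - intros x y [Z [FZ Zt]]; exact (proj1 (HF Z FZ) x y Zt).
    - intros x y y' H1 H2; destruct (union_chain_pair F _ _ Fchain H1 H2) as [Z [FZ [Z1 Z2]]].
      exact (proj1 (proj2 (HF Z FZ)) x y y' Z1 Z2).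
    - intros x x' y H1 H2; destruct (union_chain_pair F _ _ Fchain H1 H2) as [Z [FZ [Z1 Z2]]].
      exact (proj2 (proj2 (HF Z FZ)) x x' y Z1 Z2). }
  set (j := fun x => epsilon (inhabits y0) (fun y => J (x, y))).
  assert (Hj : forall x y, J (x, y) -> j x = y).
  { intros x y H; apply (Jfun x); auto.
    apply (epsilon_spec (inhabits y0) (fun y => J (x, y))); eauto. }
  assert (Hcases : (forall x, D x -> exists y, J (x, y)) \/ (forall y, E y -> exists x, J (x, y))).
  { apply NNPP; intros H; apply not_or_and in H as [H1 H2].
    apply not_all_ex_not in H1 as [a Ha]; apply imply_to_and in Ha as [Da Ha].
    apply not_all_ex_not in H2 as [b Hb]; apply imply_to_and in Hb as [Eb Hb].
    apply Ha; exists b.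
    apply (Jmax (fun t => J t \/ t = (a, b))); [intros t Ht; left; auto | | right; auto].
    refine (conj _ (conj _ _)).
    - intros x y [H|H]; [apply JDE; auto | injection H as -> ->; auto].
    - intros x y y' [H1|H1] [H2|H2].
      + eauto.
      + injection H2 as -> ->; exfalso; apply Ha; eauto.
      + injection H1 as -> ->; exfalso; apply Ha; eauto.
      + congruence.
    - intros x x' y [H1|H1] [H2|H2].
      + eauto.
      + injection H2 as -> ->; exfalso; apply Hb; eauto.
      + injection H1 as -> ->; exfalso; apply Hb; eauto.
      + congruence. }
  destruct Hcases as [Htot|Hcov]; [left; exists j; split | right; exists j].
  - intros x Dx; destruct (Htot x Dx) as [y Hy]; rewrite (Hj x y Hy); apply (JDE x y Hy).
  - intros x x' Dx Dx' E'; destruct (Htot x Dx) as [y Hy]; destruct (Htot x' Dx') as [y' Hy'].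
    apply (Jinj x x' y); auto; rewrite <- (Hj x y Hy), E', (Hj x' y' Hy'); auto.
  - intros y Ey; destruct (Hcov y Ey) as [x Hx]; exists x; split; [apply (JDE x y Hx) | auto].
Qed.

Section SquareSurjection.
Variables (K : Type) (nu : nat -> K).
Hypothesis nu_inj : forall i j, nu i = nu j -> i = j.

Lemma nu_01 : nu 0 <> nu 1.
Proof. intros E; apply nu_inj in E; discriminate. Qed.

Definition dom (G : K * (K * K) -> Prop) (x : K) := exists y, G (x, y).

(* [G] is the graph of a map from [dom G] onto [dom G x dom G].  The empty graph qualifies,
   so that Zorn applies; a nonempty one contains the two points needed by [merge]. *)
Definition square_graph (G : K * (K * K) -> Prop) :=
  (forall x y y', G (x, y) -> G (x, y') -> y = y') /\
  (forall x y, G (x, y) -> square (dom G) y) /\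
  (forall p, square (dom G) p -> exists x, G (x, p)) /\
  ((exists t, G t) -> dom G (nu 0) /\ dom G (nu 1)).

Lemma square_graph_union F :
  (forall G, F G -> square_graph G) -> chain F -> square_graph (union F).
Proof.
  intros HF Fchain.
  assert (Hdom : forall G x, F G -> dom G x -> dom (union F) x).
  { intros G x FG [y Hy]; exists y, G; auto. }
  refine (conj _ (conj _ (conj _ _))).
  - intros x y y' H1 H2; destruct (union_chain_pair F _ _ Fchain H1 H2) as [G [FG [G1 G2]]].
    exact (proj1 (HF G FG) x y y' G1 G2).
  - intros x y [G [FG Gxy]]; destruct (proj1 (proj2 (HF G FG)) x y Gxy) as [H1 H2].
    split; eapply Hdom; eauto.
  - intros p [[ya Ha] [yb Hb]].
    destruct (union_chain_pair F _ _ Fchain Ha Hb) as [G [FG [Ga Gb]]].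
    destruct (proj1 (proj2 (proj2 (HF G FG))) p) as [x Hx];
      [split; [exists ya | exists yb]; auto | exists x, G; auto].
  - intros [t [G [FG Gt]]].
    destruct (proj2 (proj2 (proj2 (HF G FG)))) as [H0 H1]; [exists t; auto|].
    split; eapply Hdom; eauto.
Qed.

Definition nu_pairing (t : K * (K * K)) :=
  exists n, t = (nu n, (nu (fst (of_nat n)), nu (snd (of_nat n)))).

Lemma dom_nu_pairing k : dom nu_pairing k <-> exists n, k = nu n.
Proof.
  split.
  - intros [y [n Hn]]; injection Hn; eauto.
  - intros [n ->]; eexists; exists n; reflexivity.
Qed.

Lemma square_graph_nu_pairing : square_graph nu_pairing.
Proof.
  refine (conj _ (conj _ (conj _ _))).
  - intros x y y' [n Hn] [n' Hn']; injection Hn as -> ->; injection Hn' as E ->.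
    apply nu_inj in E; subst; reflexivity.
  - intros x y [n Hn]; injection Hn as -> ->; split; apply dom_nu_pairing; simpl; eauto.
  - intros [a b] [Ha Hb]; simpl in Ha, Hb.
    apply dom_nu_pairing in Ha as [n1 ->]; apply dom_nu_pairing in Hb as [n2 ->].
    exists (nu (to_nat (n1, n2))), (to_nat (n1, n2)); rewrite cancel_of_to; reflexivity.
  - intros _; split; apply dom_nu_pairing; eauto.
Qed.

Definition graph_fun (G : K * (K * K) -> Prop) (x : K) : K * K :=
  epsilon (inhabits (nu 0, nu 0)) (fun y => G (x, y)).

Section Graph.
Variable G : K * (K * K) -> Prop.
Hypothesis G_square : square_graph G.

Lemma graph_fun_eq x y : G (x, y) -> graph_fun G x = y.
Proof.
  intros Gxy; apply (proj1 G_square x); auto.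
  apply (epsilon_spec (inhabits (nu 0, nu 0)) (fun y => G (x, y))); eauto.
Qed.

Lemma graph_fun_onto : onto (dom G) (square (dom G)) (graph_fun G).
Proof.
  intros p Hp; destruct (proj1 (proj2 (proj2 G_square)) p Hp) as [x Hx].
  exists x; split; [exists p; auto | apply graph_fun_eq; auto].
Qed.

Lemma graph_fun_square x : dom G x -> square (dom G) (graph_fun G x).
Proof. intros [y Hy]; rewrite (graph_fun_eq x y Hy); exact (proj1 (proj2 G_square) x y Hy). Qed.

Lemma nu_in_dom : (exists t, G t) -> dom G (nu 0) /\ dom G (nu 1).
Proof. exact (proj2 (proj2 (proj2 G_square))). Qed.

Lemma square_graph_extend (i : K -> K) :
  (exists t, G t) -> (forall x, dom G x -> ~ dom G (i x)) ->
  (forall x x', dom G x -> dom G x' -> i x = i x' -> x = x') ->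
  square_graph (fun t => G t \/ exists a, dom G a /\
                          t = (i a, lift_square (graph_fun G) (merge (graph_fun G) (nu 0) i) a)).
Proof.
  intros Gne Hout Hinj.
  set (Phi := lift_square (graph_fun G) (merge (graph_fun G) (nu 0) i)).
  set (G' := fun t => G t \/ exists a, dom G a /\ t = (i a, Phi a)).
  set (E := fun y => exists a, dom G a /\ i a = y).
  assert (Hdom : forall y, dom G' y <-> dom G y \/ E y).
  { intros y; split.
    - intros [q [Hq|[a [Da Ha]]]]; [left; exists q; auto|].
      injection Ha as -> _; right; exists a; auto.
    - intros [[p Hp]|[a [Da <-]]]; [exists p; left; auto | exists (Phi a); right; eauto]. }
  destruct (nu_in_dom Gne) as [D0 D1].
  assert (HPhi : onto (dom G) (square (fun y => dom G y \/ E y)) Phi).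
  { apply onto_lift_square; [apply graph_fun_onto|].
    apply (onto_merge _ _ _ _ (nu 1)); auto; [apply graph_fun_onto | apply nu_01 |].
    intros y [a [Da <-]]; eauto. }
  refine (conj _ (conj _ (conj _ _))).
  - intros x y y' [H|[a [Da Ha]]] [H'|[a' [Da' Ha']]].
    + apply (proj1 G_square x); auto.
    + injection Ha' as -> ->; exfalso; apply (Hout a' Da'); exists y; auto.
    + injection Ha as -> ->; exfalso; apply (Hout a Da); exists y'; auto.
    + injection Ha as -> ->; injection Ha' as E' ->.
      rewrite (Hinj a a' Da Da' E'); reflexivity.
  - intros x y [H|[a [Da Ha]]].
    + destruct (proj1 (proj2 G_square) x y H); split; apply Hdom; auto.
    + injection Ha as -> ->; destruct (graph_fun_square a Da) as [Sa1 Sa2].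
      split; apply Hdom; unfold Phi, lift_square; simpl; unfold E;
        apply merge_range, graph_fun_square; auto.
  - intros p [Hp1 Hp2]; apply Hdom in Hp1; apply Hdom in Hp2.
    destruct (HPhi p (conj Hp1 Hp2)) as [a [Da <-]].
    exists (i a); right; eauto.
  - intros _; split; apply Hdom; auto.
Qed.
End Graph.

(* A maximal square graph [G] has no injection of its domain into the complement, so the
   complement is an image of the domain, and then [dom G ->> K]. *)
Theorem square_surjection : exists h : K -> K * K, forall p, exists k, h k = p.
Proof.
  destruct (zorn square_graph square_graph_union) as [G [G_square Gmax]].
  assert (Gne : exists t, G t).
  { apply NNPP; intros H.
    destruct (proj2 (dom_nu_pairing (nu 0))) as [y Hy]; [eauto|].
    apply H; exists (nu 0, y).
    apply (Gmax nu_pairing); auto; [intros t Gt; exfalso; eauto | apply square_graph_nu_pairing]. }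
  destruct (nu_in_dom G G_square Gne) as [D0 D1].
  destruct (injection_or_onto (dom G) (fun k => ~ dom G k) (nu 0)) as [[i [Hout Hinj]]|[h Hh]].
  - exfalso; apply (Hout (nu 0) D0).
    exists (lift_square (graph_fun G) (merge (graph_fun G) (nu 0) i) (nu 0)).
    apply (Gmax _ (fun t Gt => or_introl Gt) (square_graph_extend G G_square i Gne Hout Hinj)).
    right; eauto.
  - assert (Honto : onto (dom G) (fun _ => True) (merge (graph_fun G) (nu 0) h)).
    { intros y _; apply (onto_merge _ (fun k => ~ dom G k) _ _ (nu 1)); auto;
        [apply graph_fun_onto; auto | apply nu_01 | apply classic]. }
    exists (lift_square (graph_fun G) (merge (graph_fun G) (nu 0) h)); intros p.
    destruct (onto_lift_square _ _ _ _ (graph_fun_onto G G_square) Honto p (conj I I))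
      as [k [_ Hk]].
    exists k; auto.
Qed.
End SquareSurjection.

Section ListSurjection.
Variable K : Type.
Hypothesis K_infinite : forall l : list K, exists k, ~ In k l.

Let K_inhabited : inhabited K.
Proof. destruct (K_infinite []) as [k _]; exact (inhabits k). Qed.

Definition fresh (l : list K) : K := epsilon K_inhabited (fun k => ~ In k l).

Lemma fresh_not_in l : ~ In (fresh l) l.
Proof. apply (epsilon_spec K_inhabited (fun k => ~ In k l)), K_infinite. Qed.

Fixpoint fresh_list (n : nat) : list K :=
  match n with 0 => [] | S n => fresh (fresh_list n) :: fresh_list n end.

Definition nu (n : nat) : K := fresh (fresh_list n).

Lemma nu_in i n : i < n -> In (nu i) (fresh_list n).
Proof.
  induction n as [|n IH]; intros Hi; [lia|].
  destruct (Nat.eq_dec i n) as [->|Hne]; [left; reflexivity | right; apply IH; lia].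
Qed.

Lemma nu_inj i j : nu i = nu j -> i = j.
Proof.
  intros E; destruct (Nat.lt_trichotomy i j) as [H|[H|H]]; auto; exfalso.
  - apply (fresh_not_in (fresh_list j)); fold (nu j); rewrite <- E; apply nu_in; auto.
  - apply (fresh_not_in (fresh_list i)); fold (nu i); rewrite E; apply nu_in; auto.
Qed.

Fixpoint unfold_list (h : K -> K * K) (n : nat) (k : K) : list K :=
  match n with 0 => [] | S n => fst (h k) :: unfold_list h n (snd (h k)) end.

Theorem list_surjection : exists q : K -> list K, forall s, exists k, q k = s.
Proof.
  destruct (square_surjection K nu nu_inj) as [h Hh].
  set (index := fun k => epsilon (inhabits 0) (fun n => nu n = k)).
  assert (Hindex : forall n, index (nu n) = n).
  { intros n; apply nu_inj, (epsilon_spec (inhabits 0) (fun m => nu m = nu n)); eauto. }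
  assert (Hunfold : forall s, exists k, unfold_list h (length s) k = s).
  { induction s as [|a s [k Hk]]; [exists (nu 0); reflexivity|].
    destruct (Hh (a, k)) as [k' Hk']; exists k'; simpl; rewrite Hk'; simpl; congruence. }
  exists (fun k => unfold_list h (index (fst (h k))) (snd (h k))).
  intros s; destruct (Hunfold s) as [k Hk]; destruct (Hh (nu (length s), k)) as [k' Hk'].
  exists k'; rewrite Hk'; simpl; rewrite Hindex; auto.
Qed.
End ListSurjection.

(** * Independent families *)

Definition realizes (L : list subset_omega) (sigma : subset_omega -> bool) (p : nat) :=
  forall a, In a L -> a p = sigma a.

Lemma independent_realizes (I : family) L sigma M :
  independent I -> (forall a, In a L -> I a) -> exists p, M <= p /\ realizes L sigma p.
Proof.
  intros HI HL.
  destruct (HI (filter sigma L) (filter (fun a => negb (sigma a)) L)) with (N := M)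
    as [p [Hp [H0 H1]]].
  - intros a Ha; apply filter_In in Ha as [Ha _]; auto.
  - intros a Ha; apply filter_In in Ha as [Ha _]; auto.
  - intros a Ha Hb; apply filter_In in Ha as [_ Ha]; apply filter_In in Hb as [_ Hb].
    rewrite Ha in Hb; discriminate.
  - exists p; split; auto; intros a Ha.
    destruct (sigma a) eqn:E; [apply H0 | apply H1]; apply filter_In; rewrite ?E; auto.
Qed.

(* [splits I x] says that [I + x] is independent with [x] a new member. *)
Definition splits (I : family) (x : subset_omega) :=
  forall L sigma eps M, (forall a, In a L -> I a) ->
  exists p, M <= p /\ realizes L sigma p /\ x p = eps.

Lemma maximal_not_splits (I : family) x : maximal_independent I -> ~ splits I x.
Proof.
  intros [HI Hmax] Hx.
  assert (Ix : I x).
  { apply (Hmax (fun a => I a \/ a = x)); auto.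
    intros A0 A1 H0 H1 Hdisj M.
    set (L := filter (fun a => holds (a <> x)) (A0 ++ A1)).
    destruct (Hx L (fun a => holds (In a A0)) (holds (In x A0)) M) as [p [Hp [Hr Hxp]]].
    { intros a Ha; apply filter_In in Ha as [Ha Hne]; apply holds_spec in Hne.
      apply in_app_or in Ha as [Ha|Ha]; [destruct (H0 a Ha) | destruct (H1 a Ha)]; tauto. }
    assert (Hval : forall a, In a (A0 ++ A1) -> a p = holds (In a A0)).
    { intros a Ha; destruct (classic (a = x)) as [->|Hne]; auto.
      apply Hr, filter_In; split; auto; apply holds_true; auto. }
    exists p; split; [|split]; auto.
    - intros a Ha; rewrite Hval; [apply holds_true | apply in_or_app]; auto.
    - intros a Ha; rewrite Hval; [apply holds_false | apply in_or_app]; auto.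
      intros Ha0; exact (Hdisj a Ha0 Ha). }
  destruct (Hx [x] (fun _ => false) true 0) as [p [_ [Hr Hxp]]]; [intros a [<-|[]]; auto|].
  rewrite (Hr x (or_introl eq_refl)) in Hxp; discriminate.
Qed.

Lemma count_occ_next {Y} (dec : forall a b : Y, {a = b} + {a <> b}) (tau : nat -> Y) q1 q2 :
  q1 < q2 -> (forall p, q1 < p < q2 -> tau p <> tau q1) ->
  count_occ dec (map tau (seq 0 q2)) (tau q1) = S (count_occ dec (map tau (seq 0 q1)) (tau q1)).
Proof.
  intros Hq Hbetween.
  replace q2 with (q1 + S (q2 - S q1)) by lia.
  rewrite seq_app, map_app, count_occ_app; simpl map; rewrite count_occ_cons_eq by auto.
  rewrite (proj1 (count_occ_not_In dec (map tau (seq (S q1) (q2 - S q1))) _)); [lia|].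
  intros Hin; apply in_map_iff in Hin as [p [Hp Hin]]; apply in_seq in Hin.
  apply (Hbetween p); auto; lia.
Qed.

(* A finite [I] is not maximal: the set taking alternate values along each atom of the
   Boolean algebra generated by [I] splits [I]. *)
Lemma maximal_independent_infinite (I : family) :
  maximal_independent I -> forall l, exists a, I a /\ ~ In a l.
Proof.
  intros HM l; apply NNPP; intros Hfin.
  set (lI := filter (fun a => holds (I a)) l).
  assert (HlI : forall a, In a lI <-> I a).
  { intros a; unfold lI; rewrite filter_In; split; [intros [_ H]; apply holds_spec; auto|].
    intros Ia; split; [apply NNPP; intros Hn; apply Hfin; eauto | apply holds_true; auto]. }
  set (atom := fun p => map (fun a : subset_omega => a p) lI).
  set (dec := list_eq_dec Bool.bool_dec).
  set (x := fun p => Nat.odd (count_occ dec (map atom (seq 0 p)) (atom p))).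
  apply (maximal_not_splits I x HM); intros L sigma eps M HL.
  destruct HM as [HI _].
  destruct (independent_realizes I L sigma M HI HL) as [q1 [Hq1 Hr1]].
  assert (Hatom : forall p, atom p = atom q1 -> realizes L sigma p).
  { intros p Hp a Ha; rewrite <- (Hr1 a Ha).
    exact (proj1 map_ext_in_iff Hp a (proj2 (HlI a) (HL a Ha))). }
  destruct (least_witness (fun p => q1 < p /\ atom p = atom q1)) as [q2 [[Hq2 Hat2] Hmin]].
  { destruct (independent_realizes I lI (fun a => a q1) (S q1) HI (fun a => proj1 (HlI a)))
      as [p [Hp Hr]].
    exists p; split; [lia | apply map_ext_in_iff; auto]. }
  assert (Hx2 : x q2 = negb (x q1)).
  { unfold x; rewrite Hat2, count_occ_next, Nat.odd_succ, <- Nat.negb_odd; auto.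
    intros p Hp E; apply (Hmin p); [lia | split; [lia | auto]]. }
  destruct (Bool.bool_dec (x q1) eps) as [E|E]; [exists q1 | exists q2];
    repeat split; auto; try lia.
  rewrite Hx2; destruct (x q1), eps; simpl; congruence.
Qed.

Section Accumulation.
Variable I : family.
Hypothesis I_infinite : forall l, exists a, I a /\ ~ In a l.

Lemma accumulation_point : exists z, forall n l, exists a, I a /\ agree n a z /\ ~ In a l.
Proof.
  destruct (I_infinite []) as [a0 _].
  apply (infinite_branch _ (fun n f => forall l, exists a, I a /\ agree n a f /\ ~ In a l) a0).
  - intros n f f' Hf H l; destruct (H l) as [a [Ia [Ha Hl]]].
    exists a; repeat split; auto; apply (agree_trans n a f); auto.
  - intros l; destruct (I_infinite l) as [a [Ia Hl]].
    exists a; repeat split; auto; intros i Hi; lia.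
  - intros n f H; apply NNPP; intros Hn.
    destruct (not_all_ex_not _ _ (fun H1 => Hn (ex_intro _ true H1))) as [l1 Hl1].
    destruct (not_all_ex_not _ _ (fun H2 => Hn (ex_intro _ false H2))) as [l2 Hl2].
    destruct (H (l1 ++ l2)) as [a [Ia [Ha Hl]]].
    pose proof (agree_upd n f a Ha) as Ha'.
    destruct (a n); [apply Hl1 | apply Hl2]; exists a; repeat split; auto;
      intros Hin; apply Hl, in_or_app; auto.
Qed.

Lemma converging_sequence : exists (z : subset_omega) (e : nat -> nat) (A : nat -> subset_omega),
  (forall j, I (A j)) /\ (forall j, agree (e j) (A j) z) /\
  (forall j, A j (e j) <> z (e j)) /\ (forall j, e j < e (S j)).
Proof.
  destruct accumulation_point as [z Hz].
  assert (Hsplit : forall t, exists na : nat * subset_omega, t < fst na /\ I (snd na) /\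
                     agree (fst na) (snd na) z /\ snd na (fst na) <> z (fst na)).
  { intros t; destruct (Hz (S t) [z]) as [a [Ia [Ha Hne]]].
    assert (Haz : a <> z) by (intros ->; apply Hne; left; auto).
    destruct (first_difference a z Haz) as [n [Hn Hdiff]].
    exists (n, a); simpl; repeat split; auto.
    destruct (Nat.lt_ge_cases t n) as [|Hle]; auto.
    exfalso; apply Hdiff, Ha; lia. }
  destruct (choice _ Hsplit) as [h Hh].
  set (t := fun j => Nat.iter j (fun t => fst (h t)) 0).
  exists z, (fun j => t (S j)), (fun j => snd (h (t j))).
  repeat split; intros j; try apply (Hh (t j)).
  apply (Hh (t (S j))).
Qed.
End Accumulation.

Definition separated (m : nat) (L : list subset_omega) :=
  forall a b, In a L -> In b L -> a <> b -> ~ agree m a b.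

Lemma separated_cons m a L :
  separated m L -> (forall b, In b L -> ~ agree m a b) -> separated m (a :: L).
Proof.
  intros HL Ha b c [<-|Hb] [<-|Hc] Hbc; auto.
  intros H; apply (Ha b Hb), agree_sym; auto.
Qed.

Lemma separated_incl m L L' : incl L L' -> separated m L' -> separated m L.
Proof. intros Hincl HL a b Ha Hb; apply HL; auto. Qed.

Lemma eventually_separated L : eventually (fun m => separated m L).
Proof.
  destruct (eventually_forall_in L (fun a m => forall b, In b L -> a <> b -> ~ agree m a b))
    as [N HN]; [|exists N; intros m Hm a b Ha Hb; apply HN; auto].
  intros a _; apply (eventually_forall_in L (fun b m => a <> b -> ~ agree m a b)).
  intros b _; destruct (classic (a = b)) as [->|Hab]; [exists 0; tauto|].
  destruct (eventually_nagree a b Hab) as [N HN]; exists N; auto.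
Qed.

Lemma labelling_exists {X} (L : list X) (sg : list bool) :
  NoDup L -> length sg = length L -> exists sigma : X -> bool, map sigma L = sg.
Proof.
  revert sg; induction L as [|a L IH]; intros [|b sg] HL Hlen; try discriminate.
  - exists (fun _ => false); reflexivity.
  - apply NoDup_cons_iff in HL as [Ha HL].
    destruct (IH sg HL) as [sigma Hsigma]; [simpl in Hlen; lia|].
    exists (fun x => if excluded_middle_informative (x = a) then b else sigma x); simpl.
    destruct (excluded_middle_informative (a = a)); [|tauto]; f_equal.
    rewrite <- Hsigma; apply map_ext_in; intros x Hx.
    destruct (excluded_middle_informative (x = a)); [subst; tauto | reflexivity].
Qed.

Lemma nth_map_seq {Y} (f : nat -> Y) r q d : q < r -> nth q (map f (seq 0 r)) d = f q.
Proof.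
  intros Hq; rewrite (nth_indep _ d (f 0)) by (rewrite length_map, length_seq; auto).
  rewrite map_nth, seq_nth; auto.
Qed.

Fixpoint words (r : nat) : list (list bool) :=
  match r with 0 => [[]] | S r => map (cons true) (words r) ++ map (cons false) (words r) end.

Lemma in_words (l : list bool) : In l (words (length l)).
Proof.
  induction l as [|b l IH]; simpl; auto; apply in_or_app.
  destruct b; [left | right]; apply in_map; auto.
Qed.

Fixpoint running_max (g : nat -> nat) (m : nat) : nat :=
  match m with 0 => g 0 | S m => Nat.max (running_max g m) (g (S m)) end.

Lemma le_running_max g i m : i <= m -> g i <= running_max g m.
Proof.
  induction m as [|m IH]; intros Hi; simpl.
  - replace i with 0 by lia; auto.
  - destruct (Nat.eq_dec i (S m)) as [->|Hne]; [lia|]; specialize (IH ltac:(lia)); lia.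
Qed.

Lemma not_dominated_often (g f : nat -> nat) :
  ~ eventually_dominated g f -> forall T, exists n, T <= n /\ f n < g n.
Proof.
  intros H T; apply NNPP; intros Hn; apply H; exists T; intros n Hn'.
  apply NNPP; intros Hgt; apply Hn; exists n; split; [auto | lia].
Qed.

(** * The dominating family *)

Section Main.
Variables (K : Type) (C : K -> subset_omega -> Prop).
Hypothesis C_closed : forall k, closed_cantor (C k).
Let I : family := fun a => exists k, C k a.
Hypothesis I_maximal : maximal_independent I.
Variables (z : subset_omega) (e : nat -> nat) (A : nat -> subset_omega).
Hypothesis A_in : forall j, I (A j).
Hypothesis A_agree : forall j, agree (e j) (A j) z.
Hypothesis A_differ : forall j, A j (e j) <> z (e j).
Hypothesis e_increasing : forall j, e j < e (S j).

Lemma e_ge j : j <= e j.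
Proof. induction j as [|j IH]; [lia | specialize (e_increasing j); lia]. Qed.

Lemma A_nagree_z j m : e j < m -> ~ agree m (A j) z.
Proof. intros Hm H; apply (A_differ j), H; auto. Qed.

Lemma A_nagree_next j m : e j < m -> ~ agree m (A j) (A (S j)).
Proof.
  intros Hm H; apply (A_differ j); rewrite (H (e j) Hm); apply A_agree, e_increasing.
Qed.

Lemma A_eventually_nagree a : eventually (fun j => ~ agree (S (e j)) a (A j)).
Proof.
  destruct (classic (a = z)) as [->|Haz].
  - exists 0; intros j _ H; apply (A_differ j); symmetry; apply H; lia.
  - destruct (neq_differ a z Haz) as [d Hd]; exists (S d); intros j Hj H.
    pose proof (e_ge j).
    apply Hd; rewrite (H d) by lia; apply A_agree; lia.
Qed.

Definition covered (s : list K) (a : subset_omega) := exists k, In k s /\ C k a.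

Lemma covered_list L : (forall a, In a L -> I a) -> exists s, forall a, In a L -> covered s a.
Proof.
  induction L as [|a L IH]; intros HL; [exists []; intros a []|].
  destruct (HL a (or_introl eq_refl)) as [k Hk].
  destruct IH as [s Hs]; [intros b Hb; apply HL; right; auto|].
  exists (k :: s); intros b [<-|Hb]; [exists k; split; [left|]; auto|].
  destruct (Hs b Hb) as [k' [Hk' Ck']]; exists k'; split; [right|]; auto.
Qed.

(* The closure of [C_s + {A_j}] adds only [z]; a clopen condition removes [z] when it is
   not in [I], so that every point is in [I]. *)
Definition admissible (s : list K) (m : nat) (a : subset_omega) :=
  (covered s a \/ (a = z \/ exists j, a = A j)) /\ (I z \/ ~ agree m a z).

Lemma covered_closed s : closed (covered s).
Proof.
  intros y Hy.
  destruct (eventually_forall_in s (fun k N => forall y', agree N y' y -> ~ C k y')) as [N HN].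
  { intros k Hk; destruct (C_closed k y) as [N HN]; [intros Cy; apply Hy; exists k; auto|].
    exists N; intros n Hn y' Hy'; apply HN, (agree_le N n); auto. }
  exists N; intros y' Hy' [k [Hk Ck]]; exact (HN N (le_n N) k Hk y' Hy' Ck).
Qed.

Lemma sequence_closed : closed (fun a => a = z \/ exists j, a = A j).
Proof.
  intros y Hy.
  destruct (neq_differ y z) as [d Hd]; [intros ->; apply Hy; left; auto|].
  assert (HyA : forall j, y <> A j) by (intros j E; apply Hy; right; exists j; auto).
  destruct (eventually_and _ _ (eventually_ge (S d))
              (eventually_forall_lt (S d) (fun j N => ~ agree N y (A j))
                 (fun j _ => eventually_nagree y (A j) (HyA j)))) as [N HN].
  destruct (HN N (le_n N)) as [HdN Hsep].
  exists N; intros y' Hy' [->|[j ->]].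
  - apply Hd; symmetry; apply Hy'; lia.
  - destruct (Nat.lt_ge_cases j (S d)) as [Hj|Hj].
    + apply (Hsep j Hj), agree_sym; auto.
    + pose proof (e_ge j); apply Hd; rewrite <- (Hy' d) by lia; apply A_agree; lia.
Qed.

Lemma admissible_closed s m : closed (admissible s m).
Proof.
  apply closed_and; [apply closed_or; [apply covered_closed | apply sequence_closed]|].
  apply (closed_local m); intros y y' Hy' [H|H]; [left | right]; auto.
  intros Hy; apply H, (agree_trans m y' y); auto.
Qed.

Lemma admissible_in s m a : admissible s m a -> I a.
Proof.
  intros [[[k [_ Hk]]|[->|[j ->]]] Hz]; [exists k; auto | | auto].
  destruct Hz as [Hz|Hz]; [auto | exfalso; apply Hz; intros i _; auto].
Qed.

(* An [r]-tuple of points is coded as the sequence of its [r]-bit columns. *)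
Definition row (q : nat) (y : nat -> list bool) : subset_omega := fun i => nth q (y i) false.

Definition admissible_tuple (s : list K) (m r : nat) (y : nat -> list bool) :=
  (forall i, length (y i) = r) /\
  ((forall q, q < r -> admissible s m (row q y)) /\
   (forall q q', q < r -> q' < r -> q <> q' -> ~ agree m (row q y) (row q' y))).

Lemma row_agree N q y y' : agree N y' y -> agree N (row q y') (row q y).
Proof. intros H i Hi; unfold row; rewrite H; auto. Qed.

Lemma admissible_tuple_closed s m r : closed (admissible_tuple s m r).
Proof.
  apply closed_and; [|apply closed_and].
  - apply closed_forall; intros i; apply (closed_local (S i)); intros y y' Hy' H.
    rewrite <- (Hy' i) by lia; auto.
  - apply closed_forall; intros q; apply closed_imp.
    apply (closed_preimage (row q) (admissible s m)); [|apply admissible_closed].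
    exact (fun N y y' => row_agree N q y y').
  - apply (closed_local m); intros y y' Hy' H q q' Hq Hq' Hne Hag.
    apply (H q q' Hq Hq' Hne); intros i Hi.
    rewrite (row_agree m q y y' Hy' i Hi), (row_agree m q' y y' Hy' i Hi); auto.
Qed.

Lemma admissible_tuple_realizes s m sg y :
  admissible_tuple s m (length sg) y -> exists p, m <= p /\ y p = sg.
Proof.
  intros [Hlen [Hadm Hsep]].
  set (r := length sg) in *.
  set (rows := map (fun q => row q y) (seq 0 r)).
  assert (Hrows : NoDup rows).
  { apply NoDup_map_NoDup_ForallPairs; [|apply seq_NoDup].
    intros q q' Hq Hq' E; apply in_seq in Hq; apply in_seq in Hq'.
    destruct (Nat.eq_dec q q') as [|Hne]; auto; exfalso.
    apply (Hsep q q'); try lia; auto; rewrite E; intros i _; auto. }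
  destruct (labelling_exists rows sg Hrows) as [sigma Hsigma];
    [unfold rows; rewrite length_map, length_seq; auto|].
  destruct (independent_realizes I rows sigma m (proj1 I_maximal)) as [p [Hp Hr]].
  { intros a Ha; unfold rows in Ha; apply in_map_iff in Ha as [q [<- Hq]]; apply in_seq in Hq.
    apply (admissible_in s m), Hadm; lia. }
  exists p; split; auto.
  apply nth_ext with (d := false) (d' := false); [rewrite Hlen; auto|].
  intros q Hq; rewrite Hlen in Hq.
  rewrite <- Hsigma; unfold rows; rewrite map_map, nth_map_seq by auto.
  apply (Hr (row q y)), in_map_iff; exists q; split; auto; apply in_seq; lia.
Qed.

Definition realized_below (s : list K) (m B : nat) :=
  forall sg y, length sg <= m -> admissible_tuple s m (length sg) y ->
  exists p, m <= p <= B /\ y p = sg.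

Lemma realized_below_exists s m : exists B, realized_below s m B.
Proof.
  destruct (eventually_forall_in (flat_map words (seq 0 (S m)))
     (fun sg B => forall y, admissible_tuple s m (length sg) y ->
                 exists p, m <= p <= B /\ y p = sg))
    as [B HB].
  - intros sg _.
    destruct (compactness _ (words (length sg)) (admissible_tuple s m (length sg))
                (fun y p => m <= p /\ y p = sg)) as [B HB].
    + intros y i [Hlen _]; rewrite <- (Hlen i); apply in_words.
    + apply admissible_tuple_closed.
    + intros y y' p Hy' [Hp Hyp]; split; auto; rewrite (Hy' p); auto.
    + apply admissible_tuple_realizes.
    + exists B; intros B' HB' y Hy; destruct (HB y Hy) as [p [Hp [Hmp Hyp]]].
      exists p; split; [lia | auto].
  - exists B; intros sg y Hsg Hy; apply (HB B (le_n B)); auto.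
    apply in_flat_map; exists (length sg); split; [apply in_seq; lia | apply in_words].
Qed.

Definition realization_bound (s : list K) (m : nat) : nat :=
  epsilon (inhabits 0) (realized_below s m).

Lemma realization_bound_spec s m : realized_below s m (realization_bound s m).
Proof. apply (epsilon_spec (inhabits 0) (realized_below s m)), realized_below_exists. Qed.

Lemma realization_bound_realizes s m L sigma :
  NoDup L -> length L <= m -> separated m L -> (forall a, In a L -> admissible s m a) ->
  exists p, m <= p <= realization_bound s m /\ realizes L sigma p.
Proof.
  intros HL Hlen Hsep Hadm.
  set (y := fun i => map (fun a : subset_omega => a i) L).
  assert (Hrow : forall q, row q y = nth q L (fun _ => false)).
  { intros q; apply functional_extensionality; intros i; unfold row, y.
    exact (map_nth (fun a : subset_omega => a i) L (fun _ => false) q). }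
  destruct (realization_bound_spec s m (map sigma L) y) as [p [Hp Hyp]];
    rewrite ?length_map; auto.
  - refine (conj _ (conj _ _)).
    + intros i; unfold y; rewrite length_map; auto.
    + intros q Hq; rewrite Hrow; apply Hadm, nth_In; auto.
    + intros q q' Hq Hq' Hne; rewrite !Hrow.
      apply Hsep; try (apply nth_In; auto).
      intros E; apply Hne, (proj1 (NoDup_nth L (fun _ => false)) HL); auto.
  - exists p; split; auto; exact (proj1 map_ext_in_iff Hyp).
Qed.

Lemma window_step s L n j sigma eps :
  NoDup L -> (forall a, In a L -> covered s a) -> separated n (z :: L) ->
  (forall a, In a L -> ~ agree n a (A j) /\ ~ agree n a (A (S j))) ->
  e (S j) < n -> S (S (length L)) <= n ->
  exists p, n <= p <= realization_bound s n /\ realizes L sigma p /\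
            A j p = eps /\ A (S j) p = eps.
Proof.
  intros HL Hcov Hsep HA He Hlen.
  pose proof (e_increasing j) as Hej.
  assert (Hout : forall k, k = j \/ k = S j -> ~ In (A k) L).
  { intros k Hk Hin; destruct (HA _ Hin) as [H1 H2]; destruct Hk as [->| ->];
      [apply H1 | apply H2]; intros i _; auto. }
  set (sigma' := fun a => if excluded_middle_informative (In a L) then sigma a else eps).
  destruct (realization_bound_realizes s n (A j :: A (S j) :: L) sigma') as [p [Hp Hr]].
  - apply NoDup_cons; [intros [E|Hin] | apply NoDup_cons; auto].
    + apply (nagree_neq n _ _ (A_nagree_next j n ltac:(lia))); auto.
    + exact (Hout j (or_introl eq_refl) Hin).
  - simpl; lia.
  - apply separated_cons; [apply separated_cons|].
    + apply (separated_incl n L (z :: L)); auto; intros a Ha; right; auto.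
    + intros b Hb H; apply (proj2 (HA b Hb)), agree_sym; auto.
    + intros b [<-|Hb]; [apply A_nagree_next; lia|].
      intros H; apply (proj1 (HA b Hb)), agree_sym; auto.
  - intros a [<-|[<-|Ha]]; split; try (right; apply A_nagree_z; lia).
    + right; right; eauto.
    + right; right; eauto.
    + left; auto.
    + destruct (classic (I z)) as [Iz|nIz]; [left; auto | right].
      apply Hsep; [right; auto | left; auto |].
      intros ->; apply nIz; destruct (Hcov z Ha) as [k [_ Hk]]; exists k; auto.
  - exists p; split; auto; split; [|split].
    + intros a Ha; rewrite (Hr a) by (right; right; auto); unfold sigma'.
      destruct (excluded_middle_informative (In a L)); tauto.
    + rewrite (Hr (A j)) by (left; auto); unfold sigma'.
      destruct (excluded_middle_informative (In (A j) L)) as [Hin|]; auto.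
      destruct (Hout j (or_introl eq_refl) Hin).
    + rewrite (Hr (A (S j))) by (right; left; auto); unfold sigma'.
      destruct (excluded_middle_informative (In (A (S j)) L)) as [Hin|]; auto.
      destruct (Hout (S j) (or_intror eq_refl) Hin).
Qed.

Section Window.
Variable g : nat -> nat.

(* Window [j] is [[window_start j, window_start (S j))]; on it [g] stays below the end of
   the following window. *)
Fixpoint window_start (j : nat) : nat :=
  match j with
  | 0 => S (e 1)
  | S j => S (running_max g (window_start j) + window_start j + e (S (S j)))
  end.
Local Notation w := window_start.

Lemma window_start_step j : w j < w (S j).
Proof. simpl; lia. Qed.

Lemma window_start_lt i j : i < j -> w i < w j.
Proof. induction 1; [apply window_start_step | pose proof (window_start_step m); lia]. Qed.

Lemma window_start_ge j : j <= w j.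
Proof. induction j as [|j IH]; [lia | pose proof (window_start_step j); lia]. Qed.

Lemma e_lt_window_start j : e (S j) < w j.
Proof. destruct j; simpl; lia. Qed.

Lemma running_max_lt_window_start j : running_max g (w j) < w (S j).
Proof. simpl; lia. Qed.

Lemma window_exists p : w 0 <= p -> exists j, w j <= p < w (S j).
Proof.
  intros Hp.
  assert (H : forall k, p < w k -> exists j, w j <= p < w (S j)).
  { induction k as [|k IH]; intros Hk; [lia|].
    destruct (Nat.le_gt_cases (w k) p); [exists k; lia | auto]. }
  apply (H (S p)); pose proof (window_start_ge (S p)); lia.
Qed.

Definition window (p : nat) : nat := epsilon (inhabits 0) (fun j => w j <= p < w (S j)).

Lemma window_eq j p : w j <= p < w (S j) -> window p = j.
Proof.
  intros Hj.
  assert (Hw : w (window p) <= p < w (S (window p))).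
  { apply (epsilon_spec (inhabits 0) (fun j => w j <= p < w (S j))); eauto. }
  destruct (Nat.lt_trichotomy (window p) j) as [H|[H|H]]; auto; exfalso.
  - assert (S (window p) = j \/ S (window p) < j) as [E|E] by lia;
      [subst | pose proof (window_start_lt _ _ E)]; lia.
  - assert (S j = window p \/ S j < window p) as [E|E] by lia;
      [rewrite <- E in Hw | pose proof (window_start_lt _ _ E)]; lia.
Qed.

Definition splitting_set (p : nat) : bool := A (window p) p.

Lemma splitting_set_window j p : w j <= p < w (S j) -> splitting_set p = A j p.
Proof. intros H; unfold splitting_set; rewrite (window_eq j p H); auto. Qed.

Lemma escaping_splits :
  (forall s, exists s', incl s s' /\ ~ eventually_dominated g (realization_bound s')) ->
  splits I splitting_set.
Proof.
  intros Hesc L sigma eps M HL.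
  set (L0 := nodup (fun a b => excluded_middle_informative (a = b)) L).
  assert (HL0 : forall a, In a L0 <-> In a L) by (intros a; apply nodup_In).
  destruct (covered_list L0) as [s Hs]; [intros a Ha; apply HL, HL0; auto|].
  destruct (Hesc s) as [s' [Hss' Hnd]].
  destruct (eventually_forall_in L0 (fun a j => ~ agree (S (e j)) a (A j))
              (fun a _ => A_eventually_nagree a)) as [Nj HNj].
  destruct (eventually_and _ _ (eventually_separated (z :: L0))
              (eventually_ge (M + w Nj + S (S (length L0))))) as [T HT].
  destruct (not_dominated_often g (realization_bound s') Hnd T) as [n [HTn Hgn]].
  destruct (HT n HTn) as [Hsep Hn].
  destruct (window_exists n) as [j Hj]; [pose proof (window_start_lt 0 Nj); destruct Nj; lia|].
  assert (HjNj : Nj <= j).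
  { destruct (Nat.le_gt_cases Nj j); auto.
    assert (S j = Nj \/ S j < Nj) as [E|E] by lia;
      [subst | pose proof (window_start_lt _ _ E)]; lia. }
  pose proof (e_lt_window_start j); pose proof (e_increasing j); pose proof (window_start_step j).
  destruct (window_step s' L0 n j sigma eps) as [p [Hp [Hr [Hj0 Hj1]]]]; auto; try lia.
  - apply NoDup_nodup.
  - intros a Ha; destruct (Hs a Ha) as [k [Hk Ck]]; exists k; auto.
  - intros a Ha; split; [apply (nagree_le (S (e j))) | apply (nagree_le (S (e (S j))))];
      try (apply HNj; auto); lia.
  - exists p; split; [lia | split; [intros a Ha; apply Hr, HL0; auto|]].
    (* [p] lies in window [j] or [S j], where [splitting_set] copies [A j] or [A (S j)]. *)
    assert (Hp2 : p < w (S (S j))).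
    { pose proof (le_running_max g n (w (S j)) ltac:(lia)).
      pose proof (running_max_lt_window_start (S j)); lia. }
    destruct (Nat.lt_ge_cases p (w (S j))).
    + rewrite (splitting_set_window j p); auto; lia.
    + rewrite (splitting_set_window (S j) p); auto.
Qed.
End Window.

Lemma dominated_by_lists g :
  exists s, forall s', incl s s' -> eventually_dominated g (realization_bound s').
Proof.
  apply NNPP; intros H.
  apply (maximal_not_splits I (splitting_set g) I_maximal), escaping_splits.
  intros s; apply NNPP; intros Hs; apply H; exists s; intros s' Hss'.
  apply NNPP; intros Hd; apply Hs; exists s'; auto.
Qed.
End Main.

Theorem theorem1p4 :
  forall (K : Type) (C : K -> subset_omega -> Prop),
    (forall k, closed_cantor (C k)) ->
    maximal_independent (fun x => exists k, C k x) ->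
    exists F : K -> nat -> nat, dominating F.
Proof.
  intros K C HC HM.
  destruct (converging_sequence _ (maximal_independent_infinite _ HM))
    as [z [e [A [HA [Hagree [Hdiffer He]]]]]].
  pose proof (dominated_by_lists K C HC HM z e A HA Hagree Hdiffer He) as Hdom.
  destruct (classic (exists l : list K, forall k, In k l)) as [[l Hl]|Hinf].
  - exfalso; destruct (Hdom (fun n => S (realization_bound K C z A l n))) as [s Hs].
    destruct (Hs l (fun k _ => Hl k)) as [N HN]; specialize (HN N (le_n N)); lia.
  - destruct (list_surjection K) as [q Hq].
    { intros l; apply NNPP; intros H; apply Hinf; exists l; intros k.
      apply NNPP; intros Hk; apply H; exists k; auto. }
    exists (fun k => realization_bound K C z A (q k)); intros g.
    destruct (Hdom g) as [s Hs]; destruct (Hq s) as [k Hk].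
    exists k; rewrite Hk; apply Hs, incl_refl.
Qed.
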